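(* For every choice of post-change pmfs $f_1$, nonempty affected set $\mathcal{J}$, change point $t_1$ and every realization of the pre-change samples $X_1^{t_1-1}$, the NIPT stopping time satisfies \[ E_{f_1,\mathcal{J},t_1}\big((t_I-t_1+1)^+\,\big|\,X_1^{t_1-1}\big)\leq E_{f_1,\mathcal{J},1}\left(t_S+t_I\right). \]
   Context: Sensor network model: there are $J$ sensors. Sensor $j\in[J]=\{1,\dots,J\}$ has a finite alphabet $\mathcal{A}_j$ with $m_j$ letters; $\mathcal{P}_j$ is the simplex of pmfs on $\mathcal{A}_j$ with the $\ell_1$ norm. Sensor $j$ observes $X_{j,k}$, $k=1,2,\dots$; write $X_k=(X_{1,k},\dots,X_{J,k})$ and $X_l^k=(X_l,\dots,X_k)$. There is a known pre-change pmf $f_{j,0}\in\mathcal{P}_j$, an unknown change point $t_1\in\{1,2,\dots\}\cup\{\infty\}$, an unknown nonempty set $\mathcal{J}\subseteq[J]$ of affected sensors and unknown post-change pmfs $f_{j,1}$. For $k<t_1$ the vectors $X_k$ are i.i.d. with joint pmf $f_0=\otimes_j f_{j,0}$; for $k\ge t_1$ they are i.i.d. (independent of the past) with joint pmf $\otimes_j\tilde f_j$ where $\tilde f_j=f_{j,1}$ if $j\in\mathcal{J}$ and $\tilde f_j=f_{j,0}$ otherwise. $P_{f_1,\mathcal{J},t_1}$, $E_{f_1,\mathcal{J},t_1}$ denote the corresponding law and expectation. For each $j$ there is a concave statistic $q_j:\mathcal{P}_j\to\mathbb{R}$, Lipschitz with constant $L_j$ w.r.t. $\ell_1$, with $q_j(f_{j,0})=0$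 and $q_j(f_{j,1})\ge\underline{q}_j>0$. Let $\mathcal{A}=\times_j\mathcal{A}_j$, $\mathcal{P}$ the simplex of pmfs on $\mathcal{A}$, and $q(f)=\sum_j q_j(f_j)$ where $f_j$ is the $j$-th marginal of $f\in\mathcal{P}$. $\hat f_{X_l^k}\in\mathcal{P}$ is the empirical pmf of $X_l,\dots,X_k$. $I(f\|g)=\sum_a f(a)\log\frac{f(a)}{g(a)}$ is the KL divergence. $x^+=\max(x,0)$. Network information projection test (NIPT): fix $0<\kappa<\min_j\underline{q}_j$, a threshold $c^S>0$ and thresholds $c_n^D\ge 0$, $n\ge1$. For $n\ge1$ let $f_n^*=\arg\min\{I(f\|f_0): f\in\mathcal{P},\,q(f)\ge c^S/n+\kappa\}$. Set $\tau_1=1$ and for $k\ge1$: $S_k=\max_{\tau_k\le l\le k+1}(k-l+1)\big(q(\hat f_{X_l^k})-\kappa\big)$ (the term $l=k+1$ equals $0$), $i_k$ the maximizing $l$, $n_k=k-i_k+1$, $D_k=I(\hat f_{X_{i_k}^k}\|f^*_{n_k})$, and $\tau_{k+1}=k+1$ if $S_k\ge c^S$ and $D_k<c^D_{n_k}$, else $\tau_{k+1}=\tau_k$. Define $t_S=\inf\{k: S_k\ge c^S\}$ and $t_I=\inf\{k: S_k\ge c^S\text{ and }D_k\ge c^D_{n_k}\}$. *)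

From HB Require Import structures.
From mathcomp Require Import all_boot all_order all_algebra.
From mathcomp Require Import all_classical all_reals all_analysis.
Set Implicit Arguments.
Unset Strict Implicit.
Unset Printing Implicit Defensive.
Import Order.TTheory GRing.Theory Num.Theory.
Local Open Scope ring_scope.
Local Open Scope classical_set_scope.

Definition jointA (J : nat) (A : 'I_J -> finType) : finType :=
  {dffun forall j : 'I_J, A j}.

Section NIPT.
Variable R : realType.

Definition is_pmf (T : finType) (f : T -> R) : Prop :=
  (forall a, 0 <= f a) /\ \sum_(a : T) f a = 1.

Definition concave_on_simplex (T : finType) (qq : (T -> R) -> R) : Prop :=
  forall (f g : T -> R) (t : R), is_pmf f -> is_pmf g -> 0 <= t <= 1 ->
    t * qq f + (1 - t) * qq g <= qq (fun a => t * f a + (1 - t) * g a).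

Definition lipschitz_l1 (T : finType) (L : R) (qq : (T -> R) -> R) : Prop :=
  forall f g : T -> R, is_pmf f -> is_pmf g ->
    `|qq f - qq g| <= L * \sum_(a : T) `|f a - g a|.

(* KL divergence I(f||g) = sum_a f(a) log(f(a)/g(a)), with the usual
   conventions 0 log(0/g) = 0 and p log(p/0) = +oo for p > 0 *)
Definition KL (T : finType) (f g : T -> R) : \bar R :=
  (\sum_(a : T) (if f a == 0%R then 0%E
                 else if g a == 0%R then +oo%E
                 else (f a * ln (f a / g a))%:E))%E.

Variables (J : nat) (A : 'I_J -> finType).

Definition marginal (f : jointA A -> R) (j : 'I_J) : A j -> R :=
  fun b => \sum_(a : jointA A | a j == b) f a.
Arguments marginal f j : clear implicits.

Definition qtot (q : forall j : 'I_J, (A j -> R) -> R) (f : jointA A -> R) : R :=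
  \sum_(j < J) q j (marginal f j).

Definition prod_pmf (g : forall j : 'I_J, A j -> R) : jointA A -> R :=
  fun a => \prod_(j < J) g j (a j).

Definition empirical (x : nat -> jointA A) (l k : nat) : jointA A -> R :=
  fun a => (\sum_(l <= i < k.+1) ((x i == a)%:R : R)) / (k.+1 - l)%:R.

(* law of X_k under P_{f1,Jset,t1} *)
Definition change_law (f0 f1 : forall j : 'I_J, A j -> R) (Jset : {set 'I_J})
    (t1 k : nat) : jointA A -> R :=
  if (k < t1)%N then prod_pmf f0
  else prod_pmf (fun j => if j \in Jset then f1 j else f0 j).

Definition is_fstar (q : forall j : 'I_J, (A j -> R) -> R) (f0 : forall j : 'I_J, A j -> R)
    (kappa cS : R) (fstar : nat -> jointA A -> R) : Prop :=
  forall n : nat, (0 < n)%N ->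
    (exists f : jointA A -> R, is_pmf f /\ cS / n%:R + kappa <= qtot q f) ->
    [/\ is_pmf (fstar n), cS / n%:R + kappa <= qtot q (fstar n) &
        forall f : jointA A -> R, is_pmf f -> cS / n%:R + kappa <= qtot q f ->
          (KL (fstar n) (prod_pmf f0) <= KL f (prod_pmf f0))%E].

(* The NIPT, run on a deterministic sample path x (x k = X_k, k >= 1). *)
Section Test.
Variables (q : forall j : 'I_J, (A j -> R) -> R) (f0 : forall j : 'I_J, A j -> R)
  (kappa cS : R) (cD : nat -> R) (fstar : nat -> jointA A -> R)
  (x : nat -> jointA A).

(* (k - l + 1) (q(hat f_{x_l^k}) - kappa); equals 0 for l = k+1 *)
Definition wval (l k : nat) : R :=
  (k.+1 - l)%:R * (qtot q (empirical x l k) - kappa).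

(* S_k, given tau_k = t *)
Definition Sstat (t k : nat) : R := \big[Num.max/0]_(t <= l < k.+2) wval l k.

Definition istat (t k : nat) : nat :=
  head k.+1 [seq l <- index_iota t k.+2 | wval l k == Sstat t k].

Definition nstat (t k : nat) : nat := k.+1 - istat t k.

Definition Dstat (t k : nat) : \bar R :=
  KL (empirical x (istat t k) k) (fstar (nstat t k)).

(* tau_k, k >= 1 (tau_0 is an unused dummy) *)
Fixpoint tau (k : nat) : nat :=
  match k with
  | 0 => 1
  | k'.+1 =>
      if k' is 0 then 1
      else let t := tau k' in
           if (cS <= Sstat t k') && (Dstat t k' < (cD (nstat t k'))%:E)%E
           then k'.+1 else t
  end.

Definition S_ (k : nat) : R := Sstat (tau k) k.
Definition n_ (k : nat) : nat := nstat (tau k) k.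
Definition D_ (k : nat) : \bar R := Dstat (tau k) k.

(* t_S and t_I, as extended reals (inf of the empty set = +oo) *)
Definition t_S : \bar R :=
  ereal_inf [set (k%:R)%:E | k in [set k : nat | (0 < k)%N /\ cS <= S_ k]].
Definition t_I : \bar R :=
  ereal_inf [set (k%:R)%:E | k in
    [set k : nat | [/\ (0 < k)%N, cS <= S_ k & ((cD (n_ k))%:E <= D_ k)%E]]].
End Test.

(* the process X (indexed by k >= 1) has the law with k-th marginal pmf law k,
   the X_k being independent *)
Definition has_law (d : measure_display) (T : measurableType d) (P : probability T R)
    (X : nat -> T -> jointA A) (law : nat -> jointA A -> R) : Prop :=
  (forall k a, measurable [set w | X k w = a]) /\
  forall (n : nat) (a : nat -> jointA A),
    P [set w | forall i, (0 < i <= n)%N -> X i w = a i] =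
    (\prod_(1 <= i < n.+1) law i (a i))%:E.

Definition prefix_event (T : Type) (X : nat -> T -> jointA A) (t1 : nat)
    (xpre : nat -> jointA A) : set T :=
  [set w | forall i, (0 < i < t1)%N -> X i w = xpre i].

Definition sample_path (T : Type) (X : nat -> T -> jointA A) (w : T) : nat -> jointA A :=
  fun k => X k w.

End NIPT.

From HB Require Import structures.
From mathcomp Require Import all_boot all_order all_algebra.
From mathcomp Require Import all_classical all_reals all_analysis.
From mathcomp Require Import zify lra measurable_realfun.
Import Order.TTheory GRing.Theory Num.Theory.
Local Open Scope ring_scope.
Local Open Scope classical_set_scope.
Set Implicit Arguments.
Unset Strict Implicit.
Unset Printing Implicit Defensive.

(* Write theta_m x = (x_{m+1}, x_{m+2}, ...) for the shifted sample path.
   1. Shift and locality (deterministic): after a restart at time m the test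
      run on x is the test run on theta_m x, and all statistics at time k
      depend only on x_1, ..., x_k.
   2. Pathwise bound: let M be the first time >= t1 at which S crosses c^S.
      The test restarted at t1 dominates the test on theta_{t1-1} x, so
      M <= t1 - 1 + t_S(theta_{t1-1} x); either M is a stopping time, or M is
      a restart and t_I(x) = M + t_I(theta_M x).  Hence
        (t_I - t1 + 1)^+ <= t_S(theta_{t1-1} x) + sum_M 1[M restarts] t_I(theta_M x).
   3. Probability: events depending on finitely many samples are finite
      disjoint unions of cylinders; with independent samples, an event on
      X_1..X_K and an event on theta_K X factorize, the latter having the
      post-change law when K >= t1 - 1 (Markov property).
   4. Writing each N u {oo}-valued time as sum_n 1[n < time] and integrating
      term by term, the two terms of the pathwise bound give P(E) E_1 t_S and
      at most P(E) E_1 t_I, since restarts at distinct times are disjoint. *)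

Section Paths.
Variables (J : nat) (A : 'I_J -> finType).
Local Notation path := (nat -> jointA A).

(* the shifted path  theta_m x = (x_{m+1}, x_{m+2}, ...) (index 0 unused) *)
Definition pshift (m : nat) (x : path) : path := fun i => x (i + m)%N.

Definition agree (x y : path) (n : nat) : Prop := forall i, (0 < i <= n)%N -> x i = y i.

Definition dep (N : nat) (C : path -> Prop) : Prop :=
  forall x y, agree x y N -> C x -> C y.

Definition adapted (C : path -> nat -> Prop) : Prop :=
  forall x y k, agree x y k -> C x k -> C y k.

Lemma agree_mono (x y : path) (n k : nat) : agree x y n -> (k <= n)%N -> agree x y k.
Proof. by move=> ag kn i hi; apply: ag; lia. Qed.

Lemma agree_sym (x y : path) (n : nat) : agree x y n -> agree y x n.
Proof. by move=> ag i /ag ->. Qed.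

Lemma dep_mono (N N' : nat) (C : path -> Prop) : dep N C -> (N <= N')%N -> dep N' C.
Proof. by move=> dC NN' x y ag; apply: dC; apply: agree_mono ag NN'. Qed.

Lemma dep_and (N : nat) (B C : path -> Prop) : dep N B -> dep N C -> dep N (fun x => B x /\ C x).
Proof. by move=> dB dC x y ag [Bx Cx]; split; [apply: dB ag Bx|apply: dC ag Cx]. Qed.

Lemma dep_shift (N K : nat) (C : path -> Prop) : dep N C -> dep (N + K) (fun x => C (pshift K x)).
Proof. by move=> dC x y ag; apply: dC => i hi; rewrite /pshift; apply: ag; lia. Qed.

Lemma adapted_dep (C : path -> nat -> Prop) (k : nat) : adapted C -> dep k (C^~ k).
Proof. by move=> aC x y; apply: aC. Qed.

End Paths.

Section Statistics.
Variables (R : realType) (J : nat) (A : 'I_J -> finType)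
  (q : forall j : 'I_J, (A j -> R) -> R) (kappa cS : R) (cD : nat -> R)
  (fstar : nat -> jointA A -> R).
Local Notation path := (nat -> jointA A).
Local Notation wval := (wval q kappa).
Local Notation Sstat := (Sstat q kappa).
Local Notation istat := (istat q kappa).
Local Notation nstat := (nstat q kappa).
Local Notation Dstat := (Dstat q kappa fstar).
Local Notation tau := (tau q kappa cS cD fstar).
Local Notation S_ := (S_ q kappa cS cD fstar).
Local Notation D_ := (D_ q kappa cS cD fstar).
Local Notation n_ := (n_ q kappa cS cD fstar).

Definition cross (x : path) (k : nat) : Prop := (0 < k)%N /\ cS <= S_ x k.

Definition stopI (x : path) (k : nat) : Prop :=
  [/\ (0 < k)%N, cS <= S_ x k & ((cD (n_ x k))%:E <= D_ x k)%E].

Definition first_restart (t1 : nat) (x : path) (M : nat) : Prop :=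
  [/\ (t1 <= M)%N, cross x M, (forall i, (t1 <= i < M)%N -> ~ cross x i)
    & (D_ x M < (cD (n_ x M))%:E)%E].

Lemma empirical_shift (x : path) (m l k : nat) :
  empirical R (pshift m x) l k = empirical R x (l + m) (k + m).
Proof.
apply/funext => a; rewrite /empirical big_addn.
have -> : ((k + m).+1 - (l + m) = k.+1 - l)%N by lia.
by have -> : ((k + m).+1 - m = k.+1)%N by lia.
Qed.

Lemma wval_shift (x : path) (m l k : nat) : wval (pshift m x) l k = wval x (l + m) (k + m).
Proof.
by rewrite /wval empirical_shift; have -> : ((k + m).+1 - (l + m) = k.+1 - l)%N by lia.
Qed.

Lemma Sstat_shift (x : path) (m t k : nat) : Sstat (pshift m x) t k = Sstat x (t + m) (k + m).
Proof.
rewrite /Sstat big_addn; have -> : ((k + m).+2 - m = k.+2)%N by lia.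
by apply: eq_bigr => l _; rewrite wval_shift.
Qed.

Lemma istat_shift (x : path) (m t k : nat) :
  istat x (t + m) (k + m) = (istat (pshift m x) t k + m)%N.
Proof.
rewrite /istat /index_iota.
have -> : ((k + m).+2 - (t + m) = k.+2 - t)%N by lia.
have -> : (k + m).+1 = (m + k.+1)%N by lia.
rewrite (addnC t m) iotaDl filter_map.
have headD (s : seq nat) d : head (m + d) [seq m + i | i <- s] = (m + head d s)%N by case: s.
rewrite headD addnC; congr (head _ _ + _)%N; apply: eq_filter => l /=.
by rewrite wval_shift Sstat_shift (addnC m l) (addnC m t).
Qed.

Lemma nstat_shift (x : path) (m t k : nat) : nstat (pshift m x) t k = nstat x (t + m) (k + m).
Proof. rewrite /nstat istat_shift; lia. Qed.

Lemma Dstat_shift (x : path) (m t k : nat) : Dstat (pshift m x) t k = Dstat x (t + m) (k + m).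
Proof. by rewrite /Dstat nstat_shift istat_shift empirical_shift. Qed.

Lemma tau_S (x : path) (k : nat) : (0 < k)%N -> tau x k.+1 =
  if (cS <= Sstat x (tau x k) k) && (Dstat x (tau x k) k < (cD (nstat x (tau x k) k))%:E)%E
  then k.+1 else tau x k.
Proof. by case: k. Qed.

Lemma tau_ge1 (x : path) (k : nat) : (0 < tau x k)%N.
Proof. by elim: k => [//|[//|k] IH]; rewrite tau_S //; case: ifP. Qed.

Lemma tau_le (x : path) (k : nat) : (tau x k <= maxn k 1)%N.
Proof. by elim: k => [//|[//|k] IH]; rewrite tau_S //; case: ifP => _; lia. Qed.

Lemma tau_shift (x : path) (m : nat) : tau x m.+1 = m.+1 ->
  forall j, (0 < j)%N -> tau x (j + m) = (tau (pshift m x) j + m)%N.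
Proof.
move=> hm; elim=> [//|[|j] IH _]; first by rewrite add1n hm.
rewrite addSn tau_S; last lia.
rewrite (tau_S _ (isT : (0 < j.+1)%N)) IH // -Sstat_shift -Dstat_shift -nstat_shift.
by case: ifP => _ //; rewrite addSn.
Qed.

Lemma stopI_shift (x : path) (m j : nat) :
  tau x m.+1 = m.+1 -> stopI (pshift m x) j -> stopI x (j + m).
Proof.
move=> hm [j0 hS hD]; rewrite /stopI /S_ /D_ /n_ tau_shift //.
by rewrite -Sstat_shift -Dstat_shift -nstat_shift; split=> //; lia.
Qed.

Lemma empirical_loc (x y : path) (l k : nat) : (forall i, (l <= i <= k)%N -> x i = y i) ->
  empirical R x l k = empirical R y l k.
Proof.
move=> h; apply/funext => a; rewrite /empirical; congr (_ / _).
by apply: eq_big_nat => i hi; rewrite h.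
Qed.

(* the maximizing index of S lies in [t, k] unless the maximum is the empty window *)
Lemma istat_ge (x : path) (t k : nat) : (istat x t k <= k)%N -> (t <= istat x t k)%N.
Proof.
rewrite /istat; case E : [seq l <- _ | _] => [|l s] /=; first lia.
have : l \in [seq l <- index_iota t k.+2 | wval x l k == Sstat x t k] by rewrite E mem_head.
by rewrite mem_filter mem_index_iota => /andP[_ /andP[]].
Qed.

Lemma Sstat_loc (x y : path) (t k : nat) : (forall i, (t <= i <= k)%N -> x i = y i) ->
  [/\ Sstat x t k = Sstat y t k, Dstat x t k = Dstat y t k & nstat x t k = nstat y t k].
Proof.
move=> h.
have hw l : (t <= l)%N -> wval x l k = wval y l k.
  by move=> tl; rewrite /wval (@empirical_loc x y) // => i hi; apply: h; lia.
have hS : Sstat x t k = Sstat y t k.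
  by apply: eq_big_nat => l /andP[tl _]; rewrite hw.
have hi : istat x t k = istat y t k.
  rewrite /istat hS; congr head; apply: eq_in_filter => l.
  by rewrite mem_index_iota => /andP[tl _]; rewrite hw.
split=> //; last by rewrite /nstat hi.
rewrite /Dstat /nstat hi (@empirical_loc x y) // => i hi'.
by apply: h; have := @istat_ge y t k; lia.
Qed.

Lemma tau_loc (x y : path) (k : nat) : agree x y k -> tau x k.+1 = tau y k.+1 /\ tau x k = tau y k.
Proof.
elim: k => [//|k IH] h.
have [e1 _] := IH (agree_mono h (leqnSn k)); split=> //.
rewrite (tau_S x) // (tau_S y) // e1.
have hag i : (tau y k.+1 <= i <= k.+1)%N -> x i = y i.
  by move=> hi; apply: h; have := tau_ge1 y k.+1; lia.
by have [-> -> ->] := Sstat_loc hag.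
Qed.

Lemma stat_loc (x y : path) (k : nat) : agree x y k ->
  [/\ S_ x k = S_ y k, D_ x k = D_ y k & n_ x k = n_ y k].
Proof.
move=> h; have [_ e] := tau_loc h; rewrite /S_ /D_ /n_ e.
by apply: Sstat_loc => i hi; apply: h; have := tau_ge1 y k; lia.
Qed.

Lemma cross_adapted : adapted cross.
Proof. by move=> x y k ag [k0 c]; split => //; have [<- _ _] := stat_loc ag. Qed.

Lemma stopI_adapted : adapted stopI.
Proof.
by move=> x y k ag [k0 c dc]; have [e1 e2 e3] := stat_loc ag; rewrite /stopI -e1 -e2 -e3.
Qed.

Lemma first_restart_adapted (t1 : nat) : adapted (first_restart t1).
Proof.
move=> x y k ag [h1 cx nc dl]; split => //.
- exact: cross_adapted ag cx.
- move=> i hi cy; apply: (nc i hi); apply: (cross_adapted _ cy).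
  by apply: agree_sym; apply: agree_mono ag _; lia.
- by have [_ <- <-] := stat_loc ag.
Qed.

Lemma first_restart_uniq (t1 : nat) (x : path) (i j : nat) :
  first_restart t1 x i -> first_restart t1 x j -> i = j.
Proof.
move=> [h1 ci nci _] [h2 cj ncj _].
by case: (ltngtP i j) => // ij; exfalso; [apply: (ncj i)|apply: (nci j)] => //; lia.
Qed.

End Statistics.

Section HittingTimes.
Variable R : realType.
Local Open Scope ereal_scope.

Definition hitting_time (C : nat -> Prop) : \bar R := ereal_inf [set (k%:R)%:E | k in C].

Lemma hitting_time_le (C : nat -> Prop) (k : nat) : C k -> hitting_time C <= (k%:R)%:E.
Proof. by move=> Ck; apply: ereal_inf_lbound; exists k. Qed.

Lemma hitting_timeP (C : nat -> Prop) :
  (hitting_time C = +oo /\ forall k, ~ C k) \/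
  exists k, [/\ C k, (forall i, C i -> (k <= i)%N) & hitting_time C = (k%:R)%:E].
Proof.
have [[k Ck]|nC] := pselect (exists k, C k); last first.
  left; split; last by move=> k Ck; apply: nC; exists k.
  rewrite /hitting_time (_ : [set _ | k in C] = set0) ?ereal_inf0 //.
  by apply/seteqP; split => // z [k Ck _]; apply: nC; exists k.
right; have exC : exists n, `[< C n >] by exists k; apply/asboolP.
have [m /asboolP Cm mmin] := ex_minnP exC.
exists m; split => //; first by move=> i /asboolP /mmin.
apply/eqP; rewrite eq_le hitting_time_le //=.
by apply: le_ereal_inf_tmp => z [n Cn <-]; rewrite lee_fin ler_nat mmin //; apply/asboolP.
Qed.

Lemma hitting_time_gt (C : nat -> Prop) (n : nat) :
  (n%:R%:E < hitting_time C) <-> forall k, C k -> (n < k)%N.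
Proof.
case: (hitting_timeP C) => [[-> nC]|[k [Ck kmin ->]]].
  by split => [_ k /nC //|_]; rewrite ltry.
rewrite lte_fin ltr_nat; split => [nk i /kmin|]; [exact: leq_trans|exact].
Qed.

Definition ind (b : Prop) : \bar R := ((`[< b >] : bool)%:R)%:E.

Lemma ind_ge0 (b : Prop) : 0 <= ind b.
Proof. by rewrite /ind lee_fin; case: asboolP. Qed.

Lemma series_ones : \sum_(n <oo) (1%:E : \bar R) = +oo.
Proof.
set s := \sum_(n <oo) _.
have hN (N : nat) : N%:R%:E <= s.
  apply: le_trans (nneseries_lim_ge N _) => //.
  by rewrite sumEFin sumr_const_nat subn0 lee_fin.
move: (hN 0%N); case: s hN => [r| |] hN // _.
have := hN (Num.Def.truncn r).+1; rewrite lee_fin => /le_lt_trans/(_ (truncnS_gt r)).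
by rewrite ltxx.
Qed.

Lemma series_ind_lt (k : nat) : \sum_(n <oo) ind (n < k)%N = k%:R%:E.
Proof.
rewrite (@nneseries_split _ _ 0 k); last by move=> *; apply: ind_ge0.
rewrite eseries0 ?adde0; last by move=> i /= ki _; rewrite /ind asboolF //; lia.
rewrite add0n big_nat_cond (eq_bigr (fun _ => 1%:E)); last first.
  by move=> i /andP[/andP[_ ik] _]; rewrite /ind asboolT.
by rewrite -big_nat_cond sumEFin sumr_const_nat subn0.
Qed.

Lemma hitting_time_series (C : nat -> Prop) :
  hitting_time C = \sum_(n <oo) ind (n%:R%:E < hitting_time C).
Proof.
case: (hitting_timeP C) => [[-> _]|[k [_ _ ->]]].
  by rewrite -[LHS]series_ones; apply: eq_eseriesr => n _; rewrite /ind asboolT ?ltry.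
by rewrite -[LHS]series_ind_lt; apply: eq_eseriesr => n _; rewrite /ind lte_fin ltr_nat.
Qed.

Lemma overshoot_series (C : nat -> Prop) (m : nat) :
  maxe (hitting_time C - (m.+1%:R)%:E + 1) 0 =
  \sum_(n <oo) ind ((n + m)%:R%:E < hitting_time C).
Proof.
case: (hitting_timeP C) => [[-> _]|[k [_ _ ->]]].
  transitivity (\sum_(n <oo) (1%:E : \bar R)); first by rewrite series_ones /= maxye.
  by apply: eq_eseriesr => n _; rewrite /ind asboolT // ltry.
transitivity (\sum_(n <oo) ind (n < k - m)%N); last first.
  apply: eq_eseriesr => n _; rewrite /ind lte_fin ltr_nat !asboolb.
  by congr ((_ : bool)%:R%:E); apply/idP/idP; lia.
rewrite series_ind_lt -EFinB -EFinD -EFin_max; congr EFin.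
have [mk|km] := leqP m k.
  rewrite natrB // max_l -addn1 natrD; first by rewrite opprD addrA subrK.
  by rewrite opprD addrA subrK subr_ge0 ler_nat.
rewrite (_ : k - m = 0)%N ?max_r //; last lia.
have : (k.+1%:R <= m%:R :> R)%R by rewrite ler_nat.
by rewrite -addn1 -(addn1 m) !natrD; lra.
Qed.

End HittingTimes.

Lemma dep_hitting_time (R : realType) (J : nat) (A : 'I_J -> finType)
    (C : (nat -> jointA A) -> nat -> Prop) (n : nat) :
  adapted C -> dep n (fun x => ((n%:R : R)%:E < hitting_time R (C x))%E).
Proof.
move=> aC x y ag /hitting_time_gt h; apply/hitting_time_gt => k Cyk.
case: (leqP k n) => kn //; exfalso.
have := h k (aC _ _ _ (agree_sym (agree_mono ag kn)) Cyk); lia.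
Qed.

Section Pathwise.
Variables (R : realType) (J : nat) (A : 'I_J -> finType)
  (q : forall j : 'I_J, (A j -> R) -> R) (kappa cS : R) (cD : nat -> R)
  (fstar : nat -> jointA A -> R).
Local Notation path := (nat -> jointA A).
Local Notation Sstat := (Sstat q kappa).
Local Notation tau := (tau q kappa cS cD fstar).
Local Notation S_ := (S_ q kappa cS cD fstar).
Local Notation D_ := (D_ q kappa cS cD fstar).
Local Notation n_ := (n_ q kappa cS cD fstar).
Local Notation TS := (t_S q kappa cS cD fstar).
Local Notation TI := (t_I q kappa cS cD fstar).
Local Notation cross := (cross q kappa cS cD fstar).
Local Notation stopI := (stopI q kappa cS cD fstar).
Local Notation first_restart := (first_restart q kappa cS cD fstar).

Lemma TS_hitting (x : path) : TS x = hitting_time R (cross x).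
Proof. by []. Qed.

Lemma TI_hitting (x : path) : TI x = hitting_time R (stopI x).
Proof. by []. Qed.

(* S is a maximum over the windows starting at or after tau, so a later
   start can only decrease it *)
Lemma Sstat_anti (x : path) (t t' k : nat) : (t <= t')%N -> Sstat x t' k <= Sstat x t k.
Proof. by move=> tt'; apply: sub_bigmax_seq => l; rewrite !mem_index_iota; lia. Qed.

Lemma tau_le_no_cross (x : path) (t1 k : nat) : (0 < t1)%N -> (t1 <= k)%N ->
  (forall i, (t1 <= i < k)%N -> ~ cross x i) -> (tau x k <= t1)%N.
Proof.
move=> t10; elim: k => [|k IH] t1k nc; first lia.
have [->|ne] := eqVneq t1 k.+1; first by have := tau_le q kappa cS cD fstar x k.+1; lia.
rewrite tau_S; last lia.
case: ifP => [/andP[c _]|_]; last by apply: IH => [|i hi]; [lia|apply: nc; lia].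
by exfalso; apply: (nc k); [lia|split; [lia|exact: c]].
Qed.

Lemma tau_no_cross (y : path) (j : nat) :
  (forall i, (0 < i < j)%N -> ~ cross y i) -> tau y j = 1%N.
Proof.
elim: j => [//|[//|j] IH] nc; rewrite tau_S //.
case: ifP => [/andP[c _]|_]; last by apply: IH => i hi; apply: nc; lia.
by exfalso; apply: (nc j.+1); [lia|split; [lia|exact: c]].
Qed.

Lemma tau_restart (x : path) (M : nat) : cross x M ->
  (D_ x M < (cD (n_ x M))%:E)%E -> tau x M.+1 = M.+1.
Proof. by case=> M0 c Dlt; rewrite tau_S // -/(S_ x M) -/(D_ x M) -/(n_ x M) c Dlt. Qed.

(* The test on x, started afresh at t1, crosses no later than the test on
   theta_{t1-1} x: its S-statistic dominates the latter's. *)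
Lemma first_cross_after (x : path) (t1 k0 : nat) : (0 < t1)%N ->
  cross (pshift t1.-1 x) k0 -> (forall i, (0 < i < k0)%N -> ~ cross (pshift t1.-1 x) i) ->
  exists M, [/\ (t1 <= M <= k0 + t1.-1)%N, cross x M &
                forall i, (t1 <= i < M)%N -> ~ cross x i].
Proof.
move=> t10 [k00 cy] ncy.
have exc : exists i, (t1 <= i <= k0 + t1.-1)%N /\ cross x i.
  have [[i [hi ci]]|nc] := pselect (exists i, (t1 <= i < k0 + t1.-1)%N /\ cross x i).
    by exists i; split => //; lia.
  exists (k0 + t1.-1)%N; split; first lia.
  have ht : (tau x (k0 + t1.-1) <= t1)%N.
    by apply: tau_le_no_cross => //; [lia|move=> i hi ci; apply: nc; exists i].
  split; first lia.
  apply: le_trans (Sstat_anti _ _ ht); apply: le_trans cy _.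
  rewrite /S_ tau_no_cross // Sstat_shift; have -> : (1 + t1.-1 = t1)%N by lia.
  by [].
have exP : exists i, (t1 <= i)%N && `[< cross x i >].
  by case: exc => i [hi ci]; exists i; rewrite asboolT // andbT; lia.
have [M /andP[t1M /asboolP cM] Mmin] := ex_minnP exP.
exists M; split => //.
- case: exc => i [hi ci]; have := Mmin i; rewrite asboolT // andbT; lia.
- by move=> i hi ci; have := Mmin i; rewrite asboolT //; lia.
Qed.

Lemma overshoot_le (t : \bar R) (K b t1 : nat) : (t <= K%:R%:E)%E ->
  (K <= b + t1.-1)%N -> (0 < t1)%N -> (maxe (t - t1%:R%:E + 1) 0 <= b%:R%:E)%E.
Proof.
move=> tK Kb t10; rewrite ge_max lee_fin ler0n andbT.
apply: (@le_trans _ _ (K%:R%:E - t1%:R%:E + 1)%E); first by apply: leeD => //; apply: leeD.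
rewrite -EFinB -EFinD lee_fin.
have : (K.+1%:R <= (b + t1)%:R :> R) by rewrite ler_nat; lia.
by rewrite -addn1 !natrD; lra.
Qed.

Lemma pathwise_bound (x : path) (t1 : nat) : (0 < t1)%N ->
  (maxe (TI x - t1%:R%:E + 1) 0 <= TS (pshift t1.-1 x))%E \/
  exists M, first_restart t1 x M /\
    (maxe (TI x - t1%:R%:E + 1) 0 <= TS (pshift t1.-1 x) + TI (pshift M x))%E.
Proof.
move=> t10; rewrite TS_hitting.
case: (hitting_timeP R (cross (pshift t1.-1 x))) => [[-> _]|[k0 [cy k0min ->]]].
  by left; rewrite leey.
have ncy i : (0 < i < k0)%N -> ~ cross (pshift t1.-1 x) i by move=> hi /k0min; lia.
have [M [hM cM ncM]] := first_cross_after t10 cy ncy.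
have [Dlt|Dge] := ltP (D_ x M) (cD (n_ x M))%:E; last first.
  left; apply: (overshoot_le (K := M)) => //; last lia.
  by apply: hitting_time_le; case: cM => M0 c; split.
right; exists M; split; first by split => //; case/andP: hM.
rewrite (TI_hitting (pshift M x)).
case: (hitting_timeP R (stopI (pshift M x))) => [[-> _]|[j [sj _ ->]]].
  by rewrite addey ?leey.
have sx := stopI_shift (tau_restart cM Dlt) sj.
rewrite -EFinD -natrD; apply: (overshoot_le (K := (j + M)%N)) => //.
  exact: hitting_time_le.
lia.
Qed.

End Pathwise.

Lemma bigsetU_mem (T : Type) (I : choiceType) (s : seq I) (sel : pred I) (F : I -> set T)
    (w : T) :
  (\big[setU/set0]_(i <- s | sel i) F i) w <-> exists i, [/\ i \in s, sel i & F i w].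
Proof.
rewrite -bigcup_seq_cond; split => [[i /andP[si seli] Fi]|[i [si seli Fi]]].
  by exists i.
by exists i => //; apply/andP.
Qed.

Lemma measure_bigsetU_seq d (T : measurableType d) (R : realType)
    (mu : {measure set T -> \bar R}) (I : choiceType) (s : seq I) (sel : pred I)
    (F : I -> set T) :
  uniq s -> (forall i, measurable (F i)) -> (forall i j, i != j -> F i `&` F j = set0) ->
  mu (\big[setU/set0]_(i <- s | sel i) F i) = (\sum_(i <- s | sel i) mu (F i))%E.
Proof.
move=> + mF dF; elim: s => [|h t IH]; first by rewrite !big_nil measure0.
move=> /= /andP[ht ut]; rewrite !big_cons; case: ifP => _; last exact: IH ut.
have dU : F h `&` (\big[setU/set0]_(i <- t | sel i) F i) = set0.
  apply/seteqP; split => // w [Fh /bigsetU_mem [i [it _ Fi]]].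
  have hi : h != i by apply: contraNneq ht => ->.
  by rewrite -(dF _ _ hi); split.
have mU : measurable (\big[setU/set0]_(i <- t | sel i) F i).
  by apply: bigsetU_measurable => i _; apply: mF.
by rewrite measureU //; congr (_ + _)%E; exact: IH ut.
Qed.

Section Cylinders.
Variables (R : realType) (J : nat) (A : 'I_J -> finType).
Local Notation path := (nat -> jointA A).
Variable a0 : jointA A.

Definition ext (s : seq (jointA A)) : path := fun i => nth a0 s i.-1.

Variables (d : measure_display) (T : measurableType d) (P : probability T R)
  (X : nat -> T -> jointA A) (law : nat -> jointA A -> R).
Hypothesis hl : has_law P X law.

Definition cyl (s : seq (jointA A)) : set T :=
  [set w | forall i, (i < size s)%N -> X i.+1 w = nth a0 s i].

Lemma cyl_measurable (s : seq (jointA A)) : measurable (cyl s).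
Proof.
change (measurable (\bigcap_(i in `I_(size s)) [set w | X i.+1 w = nth a0 s i])).
by apply: fin_bigcap_measurable; [exact: finite_II|move=> i _; apply: hl.1].
Qed.

Lemma cyl_prob (s : seq (jointA A)) :
  P (cyl s) = (\prod_(i < size s) law i.+1 (nth a0 s i))%:E.
Proof.
have := hl.2 (size s) (ext s).
rewrite (_ : [set w | _] = cyl s); first by move=> ->; rewrite big_add1 /= big_mkord.
apply/seteqP; split => w /= h i hi; first by rewrite (h i.+1) //; lia.
by rewrite /ext -(prednK (proj1 (andP hi))) h //; case: i hi => [//|i] /andP[].
Qed.

Lemma cyl_disj (s s' : seq (jointA A)) : size s = size s' -> s != s' ->
  cyl s `&` cyl s' = set0.
Proof.
move=> ss ne; apply/seteqP; split => // w [h h'].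
move/negP: ne; apply; apply/eqP; apply: (eq_from_nth (x0 := a0)) => // i hi.
by rewrite -h // -h' // -ss.
Qed.

Definition sample_tuple (K N : nat) (w : T) : N.-tuple (jointA A) :=
  Tuple (introT eqP (size_mkseq (fun i => X (i + K).+1 w) N)).

Lemma dep_event_cylinders (N : nat) (C : path -> Prop) : dep N C ->
  [set w | C (sample_path X w)] =
  \big[setU/set0]_(v : N.-tuple (jointA A) | `[< C (ext v) >]) cyl v.
Proof.
move=> dC; apply/seteqP; split => w /=.
  move=> Cw; apply/bigsetU_mem; exists (sample_tuple 0 N w); split.
  - exact: mem_index_enum.
  - apply/asboolP; apply: dC Cw => i hi /=.
    by rewrite /ext nth_mkseq; [congr X; lia|lia].
  - by move=> i /=; rewrite size_mkseq => hi; rewrite nth_mkseq // addn0.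
case/bigsetU_mem => v [_ /asboolP Cv cv]; apply: dC Cv => i hi.
rewrite /ext /sample_path -(prednK (proj1 (andP hi))) cv // size_tuple; lia.
Qed.

Lemma dep_event_measurable (N : nat) (C : path -> Prop) : dep N C ->
  measurable [set w | C (sample_path X w)].
Proof.
move=> dC; rewrite (dep_event_cylinders dC).
by apply: bigsetU_measurable => v _; apply: cyl_measurable.
Qed.

Lemma dep_event_prob (N : nat) (C : path -> Prop) : dep N C ->
  P [set w | C (sample_path X w)] =
  (\sum_(v : N.-tuple (jointA A) | `[< C (ext v) >]) \prod_(i < N) law i.+1 (nth a0 v i))%:E.
Proof.
move=> dC; rewrite (dep_event_cylinders dC) measure_bigsetU_seq.
- rewrite -sumEFin; apply: eq_bigr => -[s /= /eqP hs] _; subst N.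
  exact: cyl_prob.
- exact: (@index_enum_uniq (N.-tuple (jointA A))).
- by move=> v; apply: cyl_measurable.
- move=> v v' ne; apply: cyl_disj ne.
  by rewrite !size_tuple.
Qed.

End Cylinders.

Section MarkovFactorization.
Variables (R : realType) (J : nat) (A : 'I_J -> finType).
Local Notation path := (nat -> jointA A).
Variable a0 : jointA A.
Variables (d : measure_display) (T : measurableType d) (P : probability T R)
  (X : nat -> T -> jointA A) (law : nat -> jointA A -> R).
Hypothesis hl : has_law P X law.
Variables (d' : measure_display) (T' : measurableType d') (P' : probability T' R)
  (X' : nat -> T' -> jointA A) (law' : nat -> jointA A -> R).
Hypothesis hl' : has_law P' X' law'.
Variable K : nat.
Hypothesis hK : forall i, law (i + K).+1 = law' i.+1.

Lemma shifted_event_cylinders (N : nat) (B C : path -> Prop) : dep K B -> dep N C ->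
  [set w | B (sample_path X w) /\ C (pshift K (sample_path X w))] =
  \big[setU/set0]_(p : K.-tuple (jointA A) * N.-tuple (jointA A) |
     `[< B (ext a0 p.1) >] && `[< C (ext a0 p.2) >]) cyl a0 X (val p.1 ++ val p.2).
Proof.
move=> dB dC; apply/seteqP; split => w /=.
  case=> Bw Cw; apply/bigsetU_mem.
  exists (sample_tuple X 0 K w, sample_tuple X K N w); split.
  - exact: mem_index_enum.
  - apply/andP; split; apply/asboolP; [apply: dB Bw|apply: dC Cw] => i hi /=;
      by rewrite /ext /pshift /sample_path nth_mkseq; [congr X; lia|lia].
  - move=> i /=; rewrite size_cat !size_mkseq => hi; rewrite nth_cat size_mkseq.
    by case: ifP => ik; rewrite nth_mkseq; [rewrite addn0|lia|congr X; lia|lia].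
case/bigsetU_mem => -[a b] [_ /andP[/asboolP Ba /asboolP Cb] cv] /=.
have hs : size (val a ++ val b) = (K + N)%N by rewrite size_cat !size_tuple.
split; [apply: dB Ba|apply: dC Cb] => i /andP[i0 hi];
  rewrite /ext /pshift /sample_path -(prednK i0).
- rewrite cv /=; last by rewrite hs; lia.
  by rewrite nth_cat size_tuple; case: ifP => //; lia.
- rewrite addSn cv /=; last by rewrite hs; lia.
  by rewrite nth_cat size_tuple; case: ifP => h; [lia|congr nth; lia].
Qed.

Lemma markov_factorization (N : nat) (B C : path -> Prop) : dep K B -> dep N C ->
  P [set w | B (sample_path X w) /\ C (pshift K (sample_path X w))] =
  (P [set w | B (sample_path X w)] * P' [set w | C (sample_path X' w)])%E.
Proof.
move=> dB dC; rewrite (dep_event_prob a0 hl dB) (dep_event_prob a0 hl' dC) -EFinM.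
rewrite (shifted_event_cylinders dB dC) measure_bigsetU_seq; first last.
- move=> -[[s hs] [t ht]] [[s' hs'] [t' ht']] ne; apply: cyl_disj.
    by rewrite !size_cat (eqP hs) (eqP hs') (eqP ht) (eqP ht').
  apply: contraNneq ne => /= e; have : s ++ t == s' ++ t' by rewrite e.
  rewrite eqseq_cat; last by rewrite (eqP hs) (eqP hs').
  case/andP => /eqP e1 /eqP e2; subst s' t'.
  by rewrite (bool_irrelevance hs hs') (bool_irrelevance ht ht').
- by move=> p; apply: (cyl_measurable a0 hl).
- exact: index_enum_uniq.
rewrite big_distrlr /= pair_big_dep /= -sumEFin; apply: eq_bigr => -[a b] _ /=.
have := cyl_prob a0 hl (val a ++ val b).
rewrite size_cat !size_tuple => ->; congr EFin.
rewrite big_split_ord /=; congr (_ * _); apply: eq_bigr => i _.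
  by rewrite nth_cat size_tuple ltn_ord.
rewrite nth_cat size_tuple (_ : (K + i < K)%N = false); last lia.
by rewrite addnC -hK; congr (law _ (nth _ _ _)); lia.
Qed.

End MarkovFactorization.

Section SeriesIntegral.
Variables (R : realType) (d : measure_display) (T : measurableType d)
  (mu : {measure set T -> \bar R}) (D : set T).
Hypothesis mD : measurable D.
Local Open Scope ereal_scope.

Lemma ind_measurable (F : set T) : measurable F -> measurable_fun D (fun w => ind R (F w)).
Proof.
move=> mF; rewrite (_ : (fun w => ind R (F w)) = (fun w => (\1_F w : R)%:E)).
  by apply/measurable_EFinP; exact: measurable_indic.
apply/funext => w; rewrite /ind indicE.
by case: asboolP => h; [rewrite mem_set|rewrite memNset].
Qed.

Lemma integral_series_ind (F : nat -> set T) (g : T -> \bar R) :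
  (forall n, measurable (F n)) -> (forall w, g w = \sum_(n <oo) ind R (F n w)) ->
  [/\ measurable_fun D g, (forall w, 0 <= g w) &
      \int[mu]_(w in D) g w = \sum_(n <oo) mu (F n `&` D)].
Proof.
move=> mF /funext ->; split.
- apply: (@ge0_emeasurable_sum _ _ _ D (fun n w => ind R (F n w)) predT) => *.
    exact: ind_ge0.
  exact: ind_measurable.
- by move=> w; apply: nneseries_ge0 => *; apply: ind_ge0.
rewrite integral_nneseries //; last by move=> *; apply: ind_ge0.
  by apply: eq_eseriesr => n _; rewrite -integral_indic.
by move=> n; apply: ind_measurable.
Qed.

Lemma integral_double_series_ind (F : nat -> nat -> set T) (g : T -> \bar R) :
  (forall k n, measurable (F k n)) ->
  (forall w, g w = \sum_(k <oo) \sum_(n <oo) ind R (F k n w)) ->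
  [/\ measurable_fun D g, (forall w, 0 <= g w) &
      \int[mu]_(w in D) g w = \sum_(k <oo) \sum_(n <oo) mu (F k n `&` D)].
Proof.
move=> mF /funext ->.
have inner k := integral_series_ind (mF k) (fun w => erefl).
split.
- apply: (@ge0_emeasurable_sum _ _ _ D (fun k w => \sum_(n <oo) ind R (F k n w)) predT).
    by move=> k *; have [_ h _] := inner k; apply: h.
  by move=> k _; have [h _ _] := inner k.
- by move=> w; apply: nneseries_ge0 => k *; have [_ h _] := inner k; apply: h.
rewrite integral_nneseries //.
- by apply: eq_eseriesr => k _; have [_ _ h] := inner k.
- by move=> k; have [h _ _] := inner k.
- by move=> k w _; have [_ h _] := inner k; apply: h.
Qed.

End SeriesIntegral.

Section Main.
Variables (R : realType) (J : nat) (A : 'I_J -> finType)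
  (q : forall j : 'I_J, (A j -> R) -> R) (kappa cS : R) (cD : nat -> R)
  (fstar : nat -> jointA A -> R) (f0 f1 : forall j : 'I_J, A j -> R)
  (Jset : {set 'I_J}) (t1 : nat) (xpre : nat -> jointA A).
Hypothesis t10 : (0 < t1)%N.
Variables (d : measure_display) (T : measurableType d) (P : probability T R)
  (X : nat -> T -> jointA A)
  (d' : measure_display) (T' : measurableType d') (P' : probability T' R)
  (X' : nat -> T' -> jointA A).
Hypothesis hl : has_law P X (change_law f0 f1 Jset t1).
Hypothesis hl' : has_law P' X' (change_law f0 f1 Jset 1).
Variable a0 : jointA A.
Local Notation path := (nat -> jointA A).
Local Notation TS := (t_S q kappa cS cD fstar).
Local Notation TI := (t_I q kappa cS cD fstar).
Local Notation first_restart := (first_restart q kappa cS cD fstar t1).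
Local Notation E := (prefix_event X t1 xpre).
Local Open Scope ereal_scope.

Lemma dep_prefix : dep t1.-1 (fun x : path => forall i, (0 < i < t1)%N -> x i = xpre i).
Proof. by move=> x y ag Ex i hi; rewrite -ag ?Ex //; lia. Qed.

Lemma prefix_measurable : measurable E.
Proof. exact (dep_event_measurable a0 hl dep_prefix). Qed.

Lemma dep_TS (n : nat) : dep n (fun x => (n%:R : R)%:E < TS x).
Proof. exact (dep_hitting_time (n := n) (@cross_adapted _ _ _ q kappa cS cD fstar)). Qed.

Lemma dep_TI (n : nat) : dep n (fun x => (n%:R : R)%:E < TI x).
Proof. exact (dep_hitting_time (n := n) (@stopI_adapted _ _ _ q kappa cS cD fstar)). Qed.

Lemma dep_restart (k n : nat) :
  dep (n + k) (fun x => first_restart x k /\ (n%:R : R)%:E < TI (pshift k x)).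
Proof.
apply: dep_and; last exact: (dep_shift (K := k) (dep_TI (n := n))).
have := adapted_dep (k := k) (@first_restart_adapted _ _ _ q kappa cS cD fstar t1).
by move/dep_mono; apply; apply: leq_addl.
Qed.

Lemma law_after_change (K : nat) : (t1.-1 <= K)%N ->
  forall i, change_law f0 f1 Jset t1 (i + K).+1 = change_law f0 f1 Jset 1 i.+1.
Proof. by move=> hK i; rewrite /change_law ifF //; lia. Qed.

Lemma expectation_TS_TI :
  \int[P']_w (TS (sample_path X' w) + TI (sample_path X' w)) =
  \sum_(n <oo) P' [set w | n%:R%:E < TS (sample_path X' w)] +
  \sum_(n <oo) P' [set w | n%:R%:E < TI (sample_path X' w)].
Proof.
have [mS S0 eS] := @integral_series_ind _ _ _ P' setT measurableT
  (fun n => [set w | n%:R%:E < TS (sample_path X' w)]) (fun w => TS (sample_path X' w))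
  (fun n => dep_event_measurable a0 hl' (dep_TS (n := n))) (fun w => hitting_time_series _ _).
have [mI I0 eI] := @integral_series_ind _ _ _ P' setT measurableT
  (fun n => [set w | n%:R%:E < TI (sample_path X' w)]) (fun w => TI (sample_path X' w))
  (fun n => dep_event_measurable a0 hl' (dep_TI (n := n))) (fun w => hitting_time_series _ _).
rewrite (ge0_integralD P' measurableT (fun w _ => S0 w) mS (fun w _ => I0 w) mI) eS eI.
by congr (_ + _); apply: eq_eseriesr => n _; rewrite setIT.
Qed.

Lemma TS_series (x : path) : TS x = \sum_(n <oo) ind R (n%:R%:E < TS x).
Proof. exact: hitting_time_series. Qed.

Lemma TI_series (x : path) : TI x = \sum_(n <oo) ind R (n%:R%:E < TI x).
Proof. exact: hitting_time_series. Qed.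

Lemma TI_overshoot_series (x : path) :
  maxe (TI x - t1%:R%:E + 1) 0 = \sum_(n <oo) ind R ((n + t1.-1)%:R%:E < TI x).
Proof. by rewrite -{1}(prednK t10); exact: overshoot_series. Qed.

Lemma overshoot_series_bound (x : path) :
  maxe (TI x - t1%:R%:E + 1) 0 <=
  \sum_(n <oo) ind R (n%:R%:E < TS (pshift t1.-1 x)) +
  \sum_(k <oo) \sum_(n <oo) ind R (first_restart x k /\ n%:R%:E < TI (pshift k x)).
Proof.
case: (@pathwise_bound _ _ _ q kappa cS cD fstar x t1 t10) => [h|[M [hM h]]];
  apply: le_trans h _; rewrite -TS_series.
  by apply: leeDl; do 2!(apply: nneseries_ge0 => * ); apply: ind_ge0.
apply: leeD2l; rewrite (TI_series (pshift M x)).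
have -> : \sum_(n <oo) ind R (n%:R%:E < TI (pshift M x)) =
          \sum_(n <oo) ind R (first_restart x M /\ n%:R%:E < TI (pshift M x)).
  by apply: eq_eseriesr => n _; congr (ind R _); apply/propext; tauto.
apply: le_trans (nneseries_lim_ge M.+1 _); last first.
  by move=> k _ _; apply: nneseries_ge0 => n _ _; apply: ind_ge0.
rewrite big_nat_recr //=; apply: leeDr.
by apply: sume_ge0 => k _; apply: nneseries_ge0 => n _ _; apply: ind_ge0.
Qed.

Lemma integral_overshoot_le :
  \int[P]_(w in E) maxe (TI (sample_path X w) - t1%:R%:E + 1) 0 <=
  \sum_(n <oo) P ([set w | n%:R%:E < TS (pshift t1.-1 (sample_path X w))] `&` E) +
  \sum_(k <oo) \sum_(n <oo) P ([set w | first_restart (sample_path X w) k /\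
                                   n%:R%:E < TI (pshift k (sample_path X w))] `&` E).
Proof.
have [mO O0 _] := @integral_series_ind _ _ _ P E prefix_measurable
  (fun n => [set w | (n + t1.-1)%:R%:E < TI (sample_path X w)])
  (fun w => maxe (TI (sample_path X w) - t1%:R%:E + 1) 0)
  (fun n => dep_event_measurable a0 hl (dep_TI (n := (n + t1.-1)%N)))
  (fun w => TI_overshoot_series _).
have [mS S0 eS] := @integral_series_ind _ _ _ P E prefix_measurable
  (fun n => [set w | n%:R%:E < TS (pshift t1.-1 (sample_path X w))])
  (fun w => \sum_(n <oo) ind R (n%:R%:E < TS (pshift t1.-1 (sample_path X w))))
  (fun n => dep_event_measurable a0 hl (dep_shift (K := t1.-1) (dep_TS (n := n))))
  (fun w => erefl).
have [mR R0 eR] := @integral_double_series_ind _ _ _ P E prefix_measurable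
  (fun k n => [set w | first_restart (sample_path X w) k /\
                       n%:R%:E < TI (pshift k (sample_path X w))])
  (fun w => \sum_(k <oo) \sum_(n <oo) ind R (first_restart (sample_path X w) k /\
                       n%:R%:E < TI (pshift k (sample_path X w))))
  (fun k n => dep_event_measurable a0 hl (dep_restart (k := k) (n := n)))
  (fun w => erefl).
rewrite -eS -eR -(ge0_integralD P prefix_measurable (fun w _ => S0 w) mS (fun w _ => R0 w) mR).
apply: (ge0_le_integral P prefix_measurable (fun w _ => O0 w) mO (emeasurable_funD mS mR)).
by move=> w _; apply: overshoot_series_bound.
Qed.

Lemma restart_event_measurable (k : nat) :
  measurable (E `&` [set w | first_restart (sample_path X w) k]).
Proof.
apply: measurableI; first exact: prefix_measurable.
exact (dep_event_measurable a0 hl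
        (adapted_dep (k := k) (@first_restart_adapted _ _ _ q kappa cS cD fstar t1))).
Qed.

(* the path seen from t1 is independent of the prefix and distributed as X' *)
Lemma fresh_start_terms :
  \sum_(n <oo) P ([set w | n%:R%:E < TS (pshift t1.-1 (sample_path X w))] `&` E) =
  P E * \sum_(n <oo) P' [set w | n%:R%:E < TS (sample_path X' w)].
Proof.
have finE : P E \is a fin_num by apply: fin_num_measure; exact: prefix_measurable.
rewrite -(fineK finE) -nneseriesZl; last by move=> n _; apply: measure_ge0.
apply: eq_eseriesr => n _; rewrite (fineK finE).
transitivity (P [set w | (forall i, (0 < i < t1)%N -> sample_path X w i = xpre i) /\
                         n%:R%:E < TS (pshift t1.-1 (sample_path X w))]).
  by congr (P _); apply/seteqP; split => w [].
exact (markov_factorization a0 hl hl' (law_after_change (leqnn _)) dep_prefix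
         (dep_TS (n := n))).
Qed.

(* the path seen from a restart M >= t1 is independent of the samples up to M
   and distributed as X' *)
Lemma restart_term (k : nat) :
  \sum_(n <oo) P ([set w | first_restart (sample_path X w) k /\
                           n%:R%:E < TI (pshift k (sample_path X w))] `&` E) =
  P (E `&` [set w | first_restart (sample_path X w) k]) *
  \sum_(n <oo) P' [set w | n%:R%:E < TI (sample_path X' w)].
Proof.
have [t1k|kt1] := leqP t1 k; last first.
  rewrite (_ : E `&` _ = set0); last by apply/seteqP; split => // w [_ [h _ _ _]]; lia.
  rewrite measure0 mul0e eseries0 // => n _ _; rewrite (_ : _ `&` E = set0) ?measure0 //.
  by apply/seteqP; split => // w [[[h _ _ _] _] _]; lia.
have tk : (t1.-1 <= k)%N by lia.
have dB : dep k (fun x => (forall i, (0 < i < t1)%N -> x i = xpre i) /\ first_restart x k).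
  apply: dep_and; first exact: dep_mono dep_prefix tk.
  exact: (adapted_dep (k := k) (@first_restart_adapted _ _ _ q kappa cS cD fstar t1)).
have finB : P (E `&` [set w | first_restart (sample_path X w) k]) \is a fin_num.
  by apply: fin_num_measure; exact: restart_event_measurable.
rewrite -(fineK finB) -nneseriesZl; last by move=> n _; apply: measure_ge0.
apply: eq_eseriesr => n _; rewrite (fineK finB).
transitivity (P [set w | ((forall i, (0 < i < t1)%N -> sample_path X w i = xpre i) /\
                          first_restart (sample_path X w) k) /\
                         n%:R%:E < TI (pshift k (sample_path X w))]).
  by congr (P _); apply/seteqP; split => w /=; tauto.
exact (markov_factorization a0 hl hl' (law_after_change tk) dB (dep_TI (n := n))).
Qed.

(* restarts at distinct times are disjoint events *)
Lemma restart_events_le :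
  \sum_(k <oo) P (E `&` [set w | first_restart (sample_path X w) k]) <= P E.
Proof.
pose B k := E `&` [set w | first_restart (sample_path X w) k].
have mB k : measurable (B k) by exact: restart_event_measurable.
have tB : trivIset setT B.
  by move=> i j _ _ [w [[_ ri] [_ rj]]]; exact: first_restart_uniq ri rj.
have := measure_bigcup P setT B (fun i _ => mB i) tB.
rewrite (eq_eseriesl _ _ (_ : (fun i => i \in setT) =1 predT)); last by move=> i; rewrite in_setT.
move=> <-; apply: le_measure; rewrite ?inE.
- by apply: bigcupT_measurable.
- exact: prefix_measurable.
- by move=> w [k _ []].
Qed.

Lemma restart_terms_le (b : R) :
  \sum_(n <oo) P' [set w | n%:R%:E < TI (sample_path X' w)] = b%:E ->
  \sum_(k <oo) \sum_(n <oo) P ([set w | first_restart (sample_path X w) k /\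
                                   n%:R%:E < TI (pshift k (sample_path X w))] `&` E)
  <= P E * b%:E.
Proof.
move=> eb; have b0 : (0 <= b)%R by rewrite -lee_fin -eb; apply: nneseries_ge0.
under eq_eseriesr do rewrite restart_term eb muleC.
rewrite nneseriesZl; last by move=> k _; apply: measure_ge0.
by rewrite muleC lee_wpmul2r ?lee_fin //; apply: restart_events_le.
Qed.

Lemma conditional_overshoot_le : 0 < P E ->
  \int[P]_(w in E) maxe (TI (sample_path X w) - t1%:R%:E + 1) 0 * ((fine (P E))^-1)%:E <=
  \int[P']_w (TS (sample_path X' w) + TI (sample_path X' w)).
Proof.
move=> hE; have finE : P E \is a fin_num by apply: fin_num_measure; exact: prefix_measurable.
have pE0 : (0 < fine (P E))%R by rewrite -lte_fin fineK.
rewrite lee_pdivrMr // expectation_TS_TI.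
set a := \sum_(n <oo) P' _; set b := \sum_(n <oo) P' _.
have a0' : 0 <= a by apply: nneseries_ge0.
have b0 : 0 <= b by apply: nneseries_ge0.
have [eb|[rb eb]] : b = +oo \/ exists rb, b = rb%:E.
  by move: b0; case: (b) => [r| |] // _; [right; exists r|left].
  rewrite eb addey; last by rewrite gt_eqF // (lt_le_trans (ltNyr 0%R) a0').
  by rewrite mulyr gtr0_sg // mul1e leey.
apply: le_trans integral_overshoot_le _.
rewrite fresh_start_terms; apply: le_trans (leeD2l _ (restart_terms_le eb)) _.
by rewrite (fineK finE) [X in _ <= X]muleC ge0_muleDr // eb lexx.
Qed.

End Main.

Theorem lemma2 (R : realType) (J : nat) (A : 'I_J -> finType)
  (f0 f1 : forall j : 'I_J, A j -> R) (q : forall j : 'I_J, (A j -> R) -> R)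
  (L qlow : 'I_J -> R) (kappa cS : R) (cD : nat -> R)
  (fstar : nat -> jointA A -> R) (Jset : {set 'I_J}) (t1 : nat)
  (d : measure_display) (T : measurableType d) (P : probability T R)
  (X : nat -> T -> jointA A)
  (d' : measure_display) (T' : measurableType d') (P' : probability T' R)
  (X' : nat -> T' -> jointA A)
  (xpre : nat -> jointA A) :
  (forall j, is_pmf (f0 j)) ->
  (forall j, is_pmf (f1 j)) ->
  (forall j, concave_on_simplex (q j)) ->
  (forall j, lipschitz_l1 (L j) (q j)) ->
  (forall j, q j (f0 j) = 0) ->
  (forall j, 0 < qlow j) ->
  (forall j, j \in Jset -> qlow j <= q j (f1 j)) ->
  Jset != finset.set0 ->
  0 < kappa -> (forall j, kappa < qlow j) ->
  0 < cS -> (forall n, 0 <= cD n) ->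
  is_fstar q f0 kappa cS fstar ->
  (0 < t1)%N ->
  has_law P X (change_law f0 f1 Jset t1) ->
  has_law P' X' (change_law f0 f1 Jset 1) ->
  (0 < P (prefix_event X t1 xpre))%E ->
  ((\int[P]_(w in prefix_event X t1 xpre)
      maxe (t_I q kappa cS cD fstar (sample_path X w) - (t1%:R)%:E + 1%E) 0%E)
     * ((fine (P (prefix_event X t1 xpre)))^-1)%:E
   <= \int[P']_w (t_S q kappa cS cD fstar (sample_path X' w)
                  + t_I q kappa cS cD fstar (sample_path X' w)))%E.
Proof.
move=> _ _ _ _ _ _ _ _ _ _ _ _ _ t10 hl hl' hE.
(* the event E has positive probability, so T is inhabited and provides a
   default sample for the cylinder construction *)
have [w0 _] : prefix_event X t1 xpre !=set0.
  by apply/set0P/negP => /eqP E0; move: hE; rewrite E0 measure0 ltxx.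
exact: (conditional_overshoot_le q kappa cS cD fstar t10 hl hl' (X 0%N w0) hE).
Qed.
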